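(* Let $S=S^{\top}\in\mathbb{R}^{n\times n}$ be a nonnegative irreducible symmetric matrix and $K=-K^{\top}\in\mathbb{R}^{n\times n}$ a nonsingular skew-symmetric matrix such that $A=S+K\ge 0$ (entrywise). Then $n$ is even and $t\mapsto r\big((1-t)A+tA^{\top}\big)$, $t\in[0,1]$, is not constant.
   Context: $r(M)$ denotes the spectral radius of $M$. *)

From HB Require Import structures.
From mathcomp Require Import all_boot all_order all_algebra.
From mathcomp Require Import complex.
From mathcomp Require Import classical_sets reals.
Set Implicit Arguments. Unset Strict Implicit. Unset Printing Implicit Defensive.
Import Order.TTheory GRing.Theory Num.Theory.
Local Open Scope ring_scope.
Local Open Scope classical_set_scope.

Definition cspectrum (R : realType) (n : nat) (M : 'M[R]_n) : set R[i] :=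
  [set z | eigenvalue (map_mx (fun x : R => x%:C%C) M) z].

(* Spectral radius r(M) = max { |z| : z complex eigenvalue of M }
   (the set is finite, so its supremum is its maximum). *)
Definition spectral_radius (R : realType) (n : nat) (M : 'M[R]_n) : R :=
  sup [set ComplexField.Normc.normc z | z in cspectrum M].

Definition nonneg_mx (R : realType) (m n : nat) (M : 'M[R]_(m, n)) : Prop :=
  forall i j, 0 <= M i j.

(* Irreducible matrix: M is not permutation-similar to a block upper triangular
   matrix with nontrivial diagonal blocks; equivalently, for every nonempty
   proper index set I there are i in I, j not in I with M i j <> 0. *)
Definition irreducible_mx (R : realType) (n : nat) (M : 'M[R]_n) : Prop :=
  forall I : {set 'I_n}, I != finset.set0 -> I != [set: 'I_n]%SET ->
    exists i j, [/\ i \in I, j \notin I & M i j != 0].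

(* The identity det K = det K^T = (-1)^n det K forces n to be even.  For the
   spectral radii, compare t = 0, where the matrix is A = S + K, with t = 1/2,
   where it is S.  Let l be the largest eigenvalue of the symmetric matrix S, so
   that y S y^T <= l y y^T for every real row vector y.  If z is an eigenvalue
   of A with left eigenvector v, then y = |v| satisfies |z| y <= y A entrywise
   because A >= 0, and y K y^T = 0 because K is skew; hence
   |z| y y^T <= y A y^T = y S y^T <= l y y^T and |z| <= l.  Equality would make
   y an eigenvector of S, positive by irreducibility, and then force y K = 0,
   which is impossible for invertible K.  Thus r(A) < l <= r(S). *)

From HB Require Import structures.
From mathcomp Require Import all_boot all_order all_algebra.
From mathcomp Require Import complex.
From mathcomp Require Import classical_sets reals.
From mathcomp Require Import sesquilinear spectral ring.
Import Order.TTheory GRing.Theory Num.Theory.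
Set Implicit Arguments. Unset Strict Implicit. Unset Printing Implicit Defensive.
Local Open Scope ring_scope.
Local Open Scope sesquilinear_scope.

Local Notation normc := (@ComplexField.Normc.normc _).
Local Notation cmx A := (map_mx (real_complex _) A).

Lemma skew_unitmx_even (R : numDomainType) n (K : 'M[R]_n) :
  K^T = - K -> K \in unitmx -> ~~ odd n.
Proof.
move=> K_skew; apply: contraLR; rewrite negbK unitmxE => n_odd.
have detKN : \det K = - \det K.
  by rewrite -{1}det_tr K_skew -scaleN1r detZ -signr_odd n_odd mulN1r.
have : \det K *+ 2 == 0 by rewrite mulr2n {1}detKN addNr.
by rewrite mulrn_eq0 => /eqP ->; rewrite unitr0.
Qed.

Lemma skew_form0 (R : numDomainType) n (K : 'M[R]_n) (y : 'rV[R]_n) :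
  K^T = - K -> (y *m K *m y^T) 0 0 = 0.
Proof.
move=> K_skew; set q := (y *m K *m y^T) 0 0.
have qT : (y *m K *m y^T)^T = - (y *m K *m y^T).
  by rewrite !trmx_mul trmxK K_skew mulNmx mulmxN mulmxA.
have qN : q = - q by move/matrixP/(_ 0 0): qT; rewrite [LHS]mxE [RHS]mxE.
have : q *+ 2 == 0 by rewrite mulr2n {1}qN addNr.
by rewrite mulrn_eq0 => /eqP.
Qed.

Lemma midpoint_transpose (R : numFieldType) n (S K : 'M[R]_n) :
  S^T = S -> K^T = - K -> (1 - 2^-1) *: (S + K) + 2^-1 *: (S + K)^T = S.
Proof.
move=> /matrixP S_sym /matrixP K_skew; apply/matrixP => i j.
by move: (S_sym j i) (K_skew j i); rewrite !mxE => -> ->; field.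
Qed.

Lemma ler_sum_eq (R : numDomainType) (I : finType) (F G : I -> R) :
  (forall i, F i <= G i) -> \sum_i F i = \sum_i G i -> forall i, F i = G i.
Proof.
move=> leFG /esym/eqP; rewrite -subr_eq0 -sumrB => /eqP /psumr_eq0P gap0 i.
by apply/esym/eqP; rewrite -subr_eq0 gap0 // => j _; rewrite subr_ge0.
Qed.

Lemma mul_row_trE (R : pzSemiRingType) n (u v : 'rV[R]_n) :
  (u *m v^T) 0 0 = \sum_j u 0 j * v 0 j.
Proof. by rewrite mxE; apply: eq_bigr => j _; rewrite mxE. Qed.

Lemma row_norm_gt0 (R : realDomainType) n (y : 'rV[R]_n) :
  y != 0 -> 0 < (y *m y^T) 0 0.
Proof.
move=> y_neq0; rewrite mul_row_trE lt_def sumr_ge0 ?andbT => [|j _]; last first.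
  exact: sqr_ge0.
apply: contra y_neq0 => /eqP /psumr_eq0P y2_eq0; apply/eqP/rowP => j.
by apply/eqP; rewrite mxE -[_ == 0]orbb -mulf_eq0 y2_eq0 // => i _; exact: sqr_ge0.
Qed.

Section Rayleigh.
Variables (C : numClosedFieldType) (n : nat).

Definition rayleigh_bound (M : 'M[C]_n) (l : C) :=
  forall x : 'rV[C]_n,
    (x *m M *m x^t*) 0 0 <= l * (x *m x^t*) 0 0 /\
    ((x *m M *m x^t*) 0 0 = l * (x *m x^t*) 0 0 -> x *m M = l *: x).

Lemma rayleigh_bound_diag (d : 'rV[C]_n) l :
  (forall j, d 0 j <= l) -> rayleigh_bound (diag_mx d) l.
Proof.
move=> le_dl x.
have formE : (x *m diag_mx d *m x^t*) 0 0 = \sum_j d 0 j * (x 0 j * (x 0 j)^*).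
  by rewrite mul_mx_diag mxE; apply: eq_bigr => j _; rewrite !mxE mulrCA mulrA.
have normE : (x *m x^t*) 0 0 = \sum_j x 0 j * (x 0 j)^*.
  by rewrite mxE; apply: eq_bigr => j _; rewrite !mxE.
have le_term j : d 0 j * (x 0 j * (x 0 j)^*) <= l * (x 0 j * (x 0 j)^*).
  by rewrite ler_wpM2r ?mul_conjC_ge0.
rewrite formE normE mulr_sumr; split; first exact: ler_sum.
move/(ler_sum_eq le_term) => eq_term; apply/rowP => j; rewrite mul_mx_diag !mxE.
have /eqP := eq_term j; rewrite -subr_eq0 -mulrBl mulf_eq0 subr_eq0 mul_conjC_eq0.
by case/orP=> /eqP->; [rewrite mulrC | rewrite !mul0r mulr0].
Qed.

Lemma rayleigh_bound_unitary_conj (P D : 'M[C]_n) l :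
  P \is unitarymx -> rayleigh_bound D l -> rayleigh_bound (P^t* *m D *m P) l.
Proof.
move=> Pu boundD x; pose y := x *m P^t*.
have PtP : P^t* *m P = 1%:M.
  by have /unitarymxP := trmxC_unitary P; rewrite Pu trmxCK; apply.
have yC : y^t* = P *m x^t* by rewrite trmx_mul map_mxM trmxCK.
have formE : x *m (P^t* *m D *m P) *m x^t* = y *m D *m y^t*.
  by rewrite yC !mulmxA.
have normE : x *m x^t* = y *m y^t*.
  by rewrite yC mulmxA -(mulmxA x) PtP mulmx1.
rewrite formE normE; have [le_form eq_form] := boundD y; split=> // /eq_form yD.
by rewrite !mulmxA -/y yD -scalemxAl -mulmxA PtP mulmx1.
Qed.

End Rayleigh.

Section CollatzWielandt.
Variables (R : numDomainType) (n : nat).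

Definition collatz_lower (A : 'M[R]_n) (rho : R) (y : 'rV[R]_n) :=
  [/\ forall j, 0 <= y 0 j, y != 0 & forall j, rho * y 0 j <= (y *m A) 0 j].

Lemma collatz_lower_form A rho y : collatz_lower A rho y ->
  rho * (y *m y^T) 0 0 <= (y *m A *m y^T) 0 0.
Proof.
case=> y_ge0 _ le_rho; rewrite !mul_row_trE mulr_sumr.
by apply: ler_sum => j _; rewrite mulrA ler_wpM2r.
Qed.

Lemma collatz_lower_eigen A rho y : collatz_lower A rho y ->
  (forall j, y 0 j != 0) -> (y *m A *m y^T) 0 0 = rho * (y *m y^T) 0 0 ->
  y *m A = rho *: y.
Proof.
case=> y_ge0 _ le_rho y_neq0; rewrite !mul_row_trE mulr_sumr => /esym eq_form.
have le_term j : rho * (y 0 j * y 0 j) <= (y *m A) 0 j * y 0 j.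
  by rewrite mulrA ler_wpM2r.
apply/rowP => j; rewrite [RHS]mxE; apply: (mulIf (y_neq0 j)).
by rewrite -mulrA (ler_sum_eq le_term eq_form).
Qed.

End CollatzWielandt.

Section RealMatrices.
Variables (R : realType) (n : nat).

Lemma normc_real (a : R) : normc a%:C%C = `|a|.
Proof. by rewrite /= expr0n /= addr0 sqrtr_sqr. Qed.

Lemma cmx_conjtr m p (A : 'M[R]_(m, p)) : (cmx A)^t* = cmx A^T.
Proof. by apply/matrixP => i j; rewrite !mxE; exact: conjc_real. Qed.

Lemma cmx_hermitian (S : 'M[R]_n) : S^T = S -> cmx S \is hermsymmx.
Proof.
move=> S_sym; apply: realsym_hermsym.
  apply/is_hermitianmxP; rewrite expr0 scale1r map_mx_id //.
  by rewrite -{1}S_sym map_trmx.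
by apply/mxOverP => i j; rewrite mxE; apply/complex_realP; exists (S i j).
Qed.

Lemma hermitian_rayleigh (M : 'M[R[i]]_n) : (0 < n)%N -> M \is hermsymmx ->
  exists l : R, eigenvalue M l%:C%C /\ rayleigh_bound M l%:C%C.
Proof.
move=> n_gt0 M_herm; set P := spectralmx M; set d := spectral_diag M.
have Pu : P \is unitarymx := spectral_unitarymx M.
have Mdec : M = P^t* *m diag_mx d *m P.
  by rewrite -invmx_unitary //; apply/orthomx_spectralP/hermitian_normalmx.
have dR j : d 0 j = (complex.Re (d 0 j))%:C%C.
  by rewrite RRe_real //; exact: (mxOverP (hermitian_spectral_diag_real M_herm)).
pose k := [arg max_(j > Ordinal n_gt0) complex.Re (d 0 j)]%O.
exists (complex.Re (d 0 k)); split; last first.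
  rewrite Mdec; apply: rayleigh_bound_unitary_conj => //.
  apply: rayleigh_bound_diag => j.
  by rewrite [d 0 j]dR lecR /k; case: arg_maxP => // i _; apply.
apply/eigenvalueP; exists (row k P).
  rewrite Mdec !mulmxA -row_mul (unitarymxP Pu) -row_mul mul1mx.
  by rewrite row_diag_mx -scalemxAl -rowE -dR.
apply/eqP => Pk0; have /row_unitarymxP/(_ k k) := Pu.
by rewrite eqxx Pk0 dotmxE mul0mx mxE => /esym/eqP; rewrite oner_eq0.
Qed.

Lemma rayleigh_bound_cmx (S : 'M[R]_n) l (y : 'rV[R]_n) :
  rayleigh_bound (cmx S) l%:C%C ->
  (y *m S *m y^T) 0 0 <= l * (y *m y^T) 0 0 /\
  ((y *m S *m y^T) 0 0 = l * (y *m y^T) 0 0 -> y *m S = l *: y).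
Proof.
move=> /(_ (cmx y)); rewrite cmx_conjtr -!(map_mxM (real_complex R)).
rewrite ![map_mx _ _ 0 0]mxE -rmorphM lecR.
case=> le_form eq_form; split=> // eq_l.
have := eq_form ltac:(by rewrite eq_l rmorphM).
by rewrite -(map_mxZ (real_complex R)) => /map_mx_inj; apply; exact: complexI.
Qed.

Lemma irreducible_eigvec_neq0 (S : 'M[R]_n) l (y : 'rV[R]_n) :
  nonneg_mx S -> irreducible_mx S -> (forall j, 0 <= y 0 j) -> y != 0 ->
  y *m S = l *: y -> forall j, y 0 j != 0.
Proof.
move=> S_ge0 S_irr y_ge0 y_neq0 yS j0; apply/negP => /eqP yj0.
pose Z := [set j | y 0 j != 0].
have Z_neq0 : Z != finset.set0.
  apply: contra y_neq0 => /eqP Z0; apply/eqP/rowP => j; rewrite mxE.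
  by apply/eqP; move/setP/(_ j): Z0; rewrite !inE => /negbFE.
have Z_proper : Z != [set: 'I_n]%SET.
  by apply/eqP => /setP/(_ j0); rewrite !inE yj0 eqxx.
have [i [j [Zi Zj Sij]]] := S_irr Z Z_neq0 Z_proper.
move: Zi Zj; rewrite !inE negbK => yi_neq0 /eqP yj_eq0.
have terms_ge0 k : true -> 0 <= y 0 k * S k j by move=> _; exact: mulr_ge0.
move/rowP/(_ j): yS; rewrite mxE [RHS]mxE yj_eq0 mulr0 => /(psumr_eq0P terms_ge0).
by move/(_ i isT)/eqP; rewrite mulf_eq0 (negPf yi_neq0) (negPf Sij).
Qed.

Lemma eigenvalue_collatz_lower (A : 'M[R]_n) z :
  nonneg_mx A -> eigenvalue (cmx A) z -> exists y, collatz_lower A (normc z) y.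
Proof.
move=> A_ge0 /eigenvalueP [v vA v_neq0]; exists (map_mx normc v); split.
- by move=> j; rewrite mxE; case: (v 0 j) => a b; exact: sqrtr_ge0.
- apply: contra v_neq0 => /eqP/rowP v0; apply/eqP/rowP => j.
  by have := v0 j; rewrite !mxE; exact: ComplexField.Normc.eq0_normc.
move=> j; rewrite -lecR rmorphM.
have -> : (normc z)%:C%C * ((map_mx normc v) 0 j)%:C%C = `|(v *m cmx A) 0 j|.
  by rewrite vA !mxE normrM.
rewrite !mxE rmorph_sum; apply: le_trans (ler_norm_sum _ _ _) _.
by apply: ler_sum => i _; rewrite !mxE normrM rmorphM [`|_%:C%C|]ger0_norm ?ler0c.
Qed.

Lemma eigenvalues_in_seq (M : 'M[R]_n) :
  exists rs : seq R[i], forall z, eigenvalue (cmx M) z -> z \in rs.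
Proof.
have [rs char_rs] := closed_field_poly_normal (char_poly (cmx M)).
exists rs => z; rewrite eigenvalue_root_char char_rs.
by rewrite (monicP (char_poly_monic _)) scale1r root_prod_XsubC.
Qed.

Lemma normc_le_spectral_radius (M : 'M[R]_n) z :
  eigenvalue (cmx M) z -> normc z <= spectral_radius M.
Proof.
move=> Mz; have [rs rsP] := eigenvalues_in_seq M.
apply: ub_le_sup; last by exists z.
exists (\big[Order.max/0]_(w <- rs) normc w) => _ [w Mw <-].
exact: le_bigmax_seq (rsP w Mw) _.
Qed.

(* The spectrum is finite, so a strict bound on each eigenvalue is uniform. *)
Lemma spectral_radius_lt (M : 'M[R]_n) b : (0 < n)%N ->
  (forall z, eigenvalue (cmx M) z -> normc z < b) -> spectral_radius M < b.
Proof.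
move=> n_gt0 ltb; have [rs rsP] := eigenvalues_in_seq M.
pose mu := \big[Order.max/(b - 1)]_(z <- rs | eigenvalue (cmx M) z) normc z.
apply: (@le_lt_trans _ _ mu); last by apply: bigmax_lt; rewrite ?gtrDl ?ltrN10.
apply: ge_sup => [|_ [z Mz <-]]; last exact: le_bigmax_seq (rsP z Mz) Mz.
by have [z Mz] := eigenvalue_closed (cmx M) n_gt0; exists (normc z), z.
Qed.

End RealMatrices.

Section Perron.
Variables (R : realType) (n : nat) (S K : 'M[R]_n) (l : R).
Hypotheses (K_skew : K^T = - K) (S_rayleigh : rayleigh_bound (cmx S) l%:C%C).

Lemma form_addr_skew (y : 'rV[R]_n) :
  (y *m (S + K) *m y^T) 0 0 = (y *m S *m y^T) 0 0.
Proof. by rewrite mulmxDr mulmxDl mxE (skew_form0 _ K_skew) addr0. Qed.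

Lemma collatz_lower_le rho y : collatz_lower (S + K) rho y -> rho <= l.
Proof.
move=> low; have [_ y_neq0 _] := low.
rewrite -(ler_pM2r (row_norm_gt0 y_neq0)).
apply: le_trans (collatz_lower_form low) _; rewrite form_addr_skew.
exact: (rayleigh_bound_cmx y S_rayleigh).1.
Qed.

Lemma collatz_lower_lt rho y :
  nonneg_mx S -> irreducible_mx S -> K \in unitmx ->
  collatz_lower (S + K) rho y -> rho < l.
Proof.
move=> S_ge0 S_irr K_unit low; have [y_ge0 y_neq0 _] := low.
rewrite lt_neqAle (collatz_lower_le low) andbT; apply/eqP => rho_l; subst rho.
have [le_form eq_form] := rayleigh_bound_cmx y S_rayleigh.
have yAy : (y *m (S + K) *m y^T) 0 0 = l * (y *m y^T) 0 0.
  by apply/le_anti; rewrite collatz_lower_form // andbT form_addr_skew.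
have yS : y *m S = l *: y by apply: eq_form; rewrite -form_addr_skew.
have yA : y *m (S + K) = l *: y.
  apply: collatz_lower_eigen low _ yAy.
  exact: irreducible_eigvec_neq0 S_ge0 S_irr y_ge0 y_neq0 yS.
have yK : y *m K = 0 by apply: (addrI (y *m S)); rewrite addr0 -mulmxDr yA yS.
by move/eqP: yK; rewrite mulmx_free_eq0 ?row_free_unit // (negPf y_neq0).
Qed.

End Perron.

Theorem corollary3 (R : realType) (n : nat) (S K : 'M[R]_n) :
  (0 < n)%N ->
  S^T = S -> nonneg_mx S -> irreducible_mx S ->
  K^T = - K -> K \in unitmx ->
  nonneg_mx (S + K) ->
  ~~ odd n /\
  exists t1 t2 : R, [/\ 0 <= t1 <= 1, 0 <= t2 <= 1 &
    spectral_radius ((1 - t1) *: (S + K) + t1 *: (S + K)^T)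
    != spectral_radius ((1 - t2) *: (S + K) + t2 *: (S + K)^T)].
Proof.
move=> n_gt0 S_sym S_ge0 S_irr K_skew K_unit A_ge0.
split; first exact: skew_unitmx_even K_skew K_unit.
have [l [Sl S_rayleigh]] := hermitian_rayleigh n_gt0 (cmx_hermitian S_sym).
exists 0, 2^-1; split.
- by rewrite lexx ler01.
- by rewrite invr_ge0 ler0n invf_le1 ?ler1n.
rewrite subr0 scale1r scale0r addr0 midpoint_transpose // lt_eqF //.
apply: (@lt_le_trans _ _ l).
  apply: spectral_radius_lt => // z /(eigenvalue_collatz_lower A_ge0) [y low].
  exact: collatz_lower_lt low.
by apply: le_trans (normc_le_spectral_radius Sl); rewrite normc_real ler_norm.
Qed.
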